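(* Let $(x_k)$ be a bounded sequence in a real Banach space $X$, let $x\in X$ and $c>0$, and suppose that $(x_k-x)$ generates an $\ell_1$-spreading model with some constant strictly greater than $c$. Then there is $n\in\mathbb N$ such that $\operatorname{asep}((x_{k^2})_{k\ge n})>2c$.
   Context: A bounded sequence $(y_k)$ generates an $\ell_1$-spreading model with constant $\delta>0$ if $\|\sum_{i\in F}\alpha_i y_i\|\ge\delta\sum_{i\in F}|\alpha_i|$ for every finite $F\subset\mathbb N$ with $\#F\le\min F$ and all real $(\alpha_i)_{i\in F}$. For a bounded sequence $(z_j)_{j\ge1}$, $\operatorname{asep}(z_j)=\inf\{\|\frac1{\#F}(\sum_{j\in F}z_j-\sum_{j\in H}z_j)\|: F,H\subset\mathbb N\text{ finite nonempty},\ \#F=\#H,\ \max F<\min H\}$; here it is applied to the sequence $j\mapsto x_{(n+j-1)^2}$, $j\ge1$. *)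

From HB Require Import structures.
From mathcomp Require Import all_boot all_order all_algebra.
From mathcomp Require Import all_classical all_reals all_analysis.
Set Implicit Arguments. Unset Strict Implicit. Unset Printing Implicit Defensive.
Import Order.TTheory GRing.Theory Num.Theory.
Import numFieldNormedType.Exports.
Local Open Scope classical_set_scope.
Local Open Scope ring_scope.

(* Sequences are indexed by the positive integers 1,2,3,...; a sequence is a
   function nat -> V whose value at 0 is irrelevant (never used below except in
   boundedness, which is harmless). Finite subsets of N are duplicate-free
   sequences of naturals. *)

Definition bounded_seq (R : realType) (V : normedModType R) (y : nat -> V) :=
  exists M : R, forall k, `|y k| <= M.

(* (y_k) generates an l1-spreading model with constant delta:
   for every finite F ⊂ N with #F <= min F and all reals (a_i),
   ||sum_{i in F} a_i y_i|| >= delta * sum_{i in F} |a_i|.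
   (The condition "forall i in F, #F <= i" is #F <= min F; it forces i >= 1.) *)
Definition l1_spreading_model (R : realType) (V : normedModType R)
    (y : nat -> V) (delta : R) :=
  bounded_seq y /\
  forall (F : seq nat) (a : nat -> R),
    uniq F -> (forall i, i \in F -> (size F <= i)%N) ->
    delta * (\sum_(i <- F) `|a i|) <= `|\sum_(i <- F) a i *: y i|.

Definition asep (R : realType) (V : normedModType R) (z : nat -> V) : R :=
  inf [set r : R | exists F H : seq nat,
        [/\ uniq F /\ uniq H, F != [::] /\ H != [::] /\ size F = size H,
            (forall j, j \in F -> (0 < j)%N) /\ (forall j, j \in H -> (0 < j)%N),
            (forall i j, i \in F -> j \in H -> (i < j)%N) &
            r = `|(size F)%:R^-1 *: (\sum_(j <- F) z j - \sum_(j <- H) z j)| ] ].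

From HB Require Import structures.
From mathcomp Require Import all_boot all_order all_algebra.
From mathcomp Require Import all_classical all_reals all_analysis.
From mathcomp Require Import zify lra.
Import Order.TTheory GRing.Theory Num.Theory.
Import numFieldNormedType.Exports.
Local Open Scope classical_set_scope.
Local Open Scope ring_scope.

(* Write y_k = x_k - x and let M bound the norms of the y_k.  Since #F = #H,
   x cancels from the differences defining asep.  Choose n > (delta + M)/(delta - c).
   Among the 2m signed terms y_((n+j-1)^2), j in F or H with #F = m, at most m/n
   have j <= m/n; the remaining indices are at least (n + m/n)^2 >= 2m, so they
   form an admissible set for the spreading model.  Hence
   |sum_F - sum_H| >= 2m delta - (delta + M) m/n >= (delta + c) m > 2c m. *)

Lemma sumr_const_seq {V : nmodType} {I : Type} (s : seq I) (v : V) :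
  \sum_(i <- s) v = v *+ size s.
Proof. by rewrite big_const_seq count_predT iter_addr_0. Qed.

Lemma sumrB_translate {V : zmodType} {I : Type} (F H : seq I) (z : I -> V) (v : V) :
  size F = size H ->
  \sum_(i <- F) (z i - v) - \sum_(i <- H) (z i - v) =
  \sum_(i <- F) z i - \sum_(i <- H) z i.
Proof. by move=> sFH; rewrite !sumrB !sumr_const_seq sFH opprB addrA subrK. Qed.

Lemma sumrB_signed {R : pzRingType} {V : lmodType R} {I : eqType}
    (F H : seq I) (z : I -> V) :
  {in H, forall j, j \notin F} ->
  \sum_(j <- F) z j - \sum_(j <- H) z j =
  \sum_(j <- F ++ H) (if j \in F then 1 else -1) *: z j.
Proof.
move=> HF; rewrite big_cat /= -sumrN; congr (_ + _).
  by apply: eq_big_seq => j ->; rewrite scale1r.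
by apply: eq_big_seq => j /HF /negbTE ->; rewrite scaleN1r.
Qed.

Lemma count_lt_uniq_pos (t : nat) (L : seq nat) :
  uniq L -> {in L, forall j, 0 < j}%N -> (count (fun j => j < t) L <= t.-1)%N.
Proof.
move=> uL pL; rewrite -size_filter -[t.-1](size_iota 1).
apply: uniq_leq_size; first exact: filter_uniq.
by move=> j; rewrite mem_filter mem_iota => /andP[jt /pL]; lia.
Qed.

Lemma le_asep (R : realType) (V : normedModType R) (z : nat -> V) (b : R) :
  (forall F H : seq nat, uniq F -> uniq H -> F != [::] -> size F = size H ->
     (forall j, j \in F -> (0 < j)%N) -> (forall j, j \in H -> (0 < j)%N) ->
     (forall i j, i \in F -> j \in H -> (i < j)%N) ->
     b * (size F)%:R <= `|\sum_(j <- F) z j - \sum_(j <- H) z j|) ->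
  b <= asep z.
Proof.
move=> lbFH; apply: lb_le_inf.
  exists `|(size [:: 1%N])%:R^-1 *: (\sum_(j <- [:: 1%N]) z j - \sum_(j <- [:: 2%N]) z j)|.
  exists [:: 1%N], [:: 2%N]; split=> //.
  - by split=> j; rewrite inE => /eqP ->.
  - by move=> i j; rewrite !inE => /eqP -> /eqP ->.
move=> _ [F [H [[uF uH] [F0 [_ sFH]] [pF pH] FH ->]]].
have m0 : 0 < (size F)%:R :> R by rewrite ltr0n lt0n size_eq0.
rewrite normrZ ger0_norm ?invr_ge0 ?ler0n // ler_pdivlMl //.
by rewrite mulrC; apply: lbFH.
Qed.

Section SpreadingSignedSums.
Context {R : realType} {V : normedModType R} {y : nat -> V} {delta M : R}.
Hypotheses (spreading : l1_spreading_model y delta) (y_le : forall k, `|y k| <= M).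

(* The terms of index >= T are estimated by the spreading model, the others by M. *)
Lemma l1_spreading_sign_sum (G : seq nat) (a : nat -> R) (T : nat) :
  uniq G -> {in G, forall k, `|a k| = 1} -> (size G <= T)%N ->
  delta * (size G)%:R - (delta + M) * (count (fun k => (k < T)%N) G)%:R <=
  `|\sum_(k <- G) a k *: y k|.
Proof.
move=> uG a1 GT; set P := fun k => (T <= k)%N.
rewrite (eq_count (a2 := predC P)); last by move=> k /=; rewrite ltnNge.
rewrite -{1}(count_predC P G) natrD (bigID P) -!size_filter.
rewrite -(big_filter G P) -(big_filter G (predC P)).
have kept : delta * (size [seq k <- G | P k])%:R <=
    `|\sum_(k <- [seq k <- G | P k]) a k *: y k|.
  have -> : (size [seq k <- G | P k])%:R = \sum_(k <- [seq k <- G | P k]) `|a k| :> R.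
    rewrite (eq_big_seq (fun=> 1)) ?sumr_const_seq //.
    by move=> k; rewrite mem_filter => /andP[_ /a1].
  apply: spreading.2; first exact: filter_uniq.
  move=> k; rewrite mem_filter => /andP[Tk _].
  by rewrite (leq_trans _ (leq_trans GT Tk)) // size_filter count_size.
have dropped : `|\sum_(k <- [seq k <- G | predC P k]) a k *: y k| <=
    M * (size [seq k <- G | predC P k])%:R.
  rewrite -sumr_const_seq mulr_sumr.
  apply: le_trans (ler_norm_sum _ _ _) _; rewrite !big_seq; apply: ler_sum => k.
  by rewrite mem_filter mulr1 normrZ => /andP[_ /a1 ->]; rewrite mul1r.
apply: le_trans (lerB_normD _ _); lra.
Qed.

Lemma l1_spreading_sep_sq_shift (n : nat) (F H : seq nat) :
  0 <= delta -> (0 < n)%N -> uniq F -> uniq H -> size F = size H ->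
  (forall j, j \in F -> (0 < j)%N) -> (forall j, j \in H -> (0 < j)%N) ->
  (forall i j, i \in F -> j \in H -> (i < j)%N) ->
  delta * (2 * size F)%:R - (delta + M) * (size F %/ n)%:R <=
  `|\sum_(j <- F) y ((n + j - 1) ^ 2)%N - \sum_(j <- H) y ((n + j - 1) ^ 2)%N|.
Proof.
move=> delta0 n0 uF uH sFH pF pH FH.
set s := fun j => ((n + j - 1) ^ 2)%N; set m := size F; set d := (m %/ n)%N.
have s_inj : injective s by move=> i j /eqP; rewrite eqn_exp2r // => /eqP; lia.
have HF : {in H, forall j, j \notin F}.
  by move=> j jH; apply/negP => /FH /(_ jH); rewrite ltnn.
have uFH : uniq (F ++ H) by rewrite cat_uniq uF uH andbT; apply/hasPn.
rewrite -!(big_map s xpredT y) sumrB_signed -?map_cat; last first.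
  by move=> _ /mapP[j jH ->]; rewrite (mem_map s_inj); apply: HF.
set G := map s (F ++ H).
have sizeG : size G = (2 * m)%N by rewrite size_map size_cat -sFH /m; lia.
have few_small : (count (fun k => (k < (n + d) ^ 2)%N) G <= d)%N.
  rewrite count_map (eq_count (a2 := fun j => (j < d.+1)%N)).
    by apply: count_lt_uniq_pos => // j; rewrite mem_cat => /orP[/pF|/pH].
  by move=> j /=; rewrite ltn_exp2r //; lia.
have GT : (size G <= (n + d) ^ 2)%N.
  by have := divn_eq m n; have := ltn_pmod m n0; rewrite sizeG -/d; nia.
apply: le_trans _
  (@l1_spreading_sign_sum G (fun k => if k \in map s F then 1 else -1) _ _ _ GT).
- have M0 : 0 <= M := le_trans (normr_ge0 _) (y_le 0).
  by rewrite sizeG lerD2l lerN2 ler_wpM2l ?ler_nat ?addr_ge0.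
- by rewrite map_inj_uniq.
- by move=> k _; case: ifP => _; rewrite ?normrN normr1.
Qed.
End SpreadingSignedSums.

Theorem lemma4p6 (R : realType) (X : completeNormedModType R)
    (x : nat -> X) (x0 : X) (c : R) :
  bounded_seq x -> 0 < c ->
  (exists delta : R, c < delta /\ l1_spreading_model (fun k => x k - x0) delta) ->
  exists n : nat, (1 <= n)%N /\
    2 * c < asep (fun j => x ((n + j - 1) ^ 2)%N).
Proof.
move=> _ c0 [delta [cd spr]]; have [M y_le] := spr.1.
set n := (Num.truncn ((delta + M) / (delta - c))).+1.
have n_large : delta + M <= n%:R * (delta - c).
  by rewrite -ler_pdivrMr ?subr_gt0 // ltW // truncnS_gt.
exists n; split=> //.
apply: (@lt_le_trans _ _ (delta + c)); first lra.
apply: le_asep => F H uF uH _ sFH pF pH FH.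
rewrite -(sumrB_translate F H (fun j => x ((n + j - 1) ^ 2)%N) x0 sFH).
have := l1_spreading_sep_sq_shift spr y_le n F H (ltW (lt_trans c0 cd)) isT
  uF uH sFH pF pH FH.
set m := size F; set d := (m %/ n)%N.
have : (delta + M) * d%:R <= (delta - c) * m%:R.
  have dn : d%:R * n%:R <= m%:R :> R by rewrite -natrM ler_nat leq_divM.
  have := ler_wpM2r (ler0n _ d) n_large.
  have : (delta - c) * (d%:R * n%:R) <= (delta - c) * m%:R.
    by rewrite ler_wpM2l // subr_ge0 ltW.
  nra.
rewrite natrM; lra.
Qed.
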